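(* Consider a Stochastic Non-atomic Congestion Game (SNCG) as described in the context, with a non-atomic agent measure $m$. Let $\bm{\pi}^*$ be a Nash equilibrium joint policy. Then for every global state $s \in \mathcal{S}$, every local state $z \in \mathcal{Z}$ and all agents $i, j \in \mathcal{N}^s_z$, $$v_{iz}(s, \pi^*_{iz}, \bm{\pi}^*_{-i}) = v_{jz}(s, \pi^*_{jz}, \bm{\pi}^*_{-j}),$$ i.e. the values of agents present in the same local state are equal at equilibrium.
   Context: An SNCG is a tuple $\langle \mathcal{N}, \mathcal{Z}, \mathcal{S}, \mathcal{A}, \mathcal{T}, \mathcal{R}\rangle$. The set of agents $\mathcal{N}$ is endowed with a measure space $(\mathcal{N}, \mathcal{M}, m)$, where $m$ is a finite Lebesgue measure with $m(\mathcal{N}) = 1$ that is non-atomic, i.e. $m(\{i\}) = 0$ for every agent $i$. $\mathcal{Z}$ is a finite set of local states. In a global state $s \in \mathcal{S}$, $\mathcal{N}$ is partitioned into disjoint sets $\mathcal{N}^s_z$ ($z \in \mathcal{Z}$), the agents in local state $z$, and $s$ is identified with the mass distribution $\langle m(\mathcal{N}^s_1), \dots, m(\mathcal{N}^s_{|\mathcal{Z}|})\rangle$. Each local state $z$ has an action set $\mathcal{A}_z$, the same for all agents in $z$. A policy of agent $i$ is $\pi_i = (\pi_{iz}(s))_{s, z}$ with $\pi_{iz}(\cdot\mid s)$ a distribution over $\mathcal{A}_z$; $\Pi_z$ is the set of such local policies (the same for every agent). Writing $act(k)$ for the action of agent $k$, $f^a_z(s) = \int_{k\in\mathcal{N}^s_z}\mathbb{1}_{(act(k)=a)}\,dm(k)$,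 the joint action is $\bm{a} = ((f^a_z)_{a})_{z}$, and $\phi^a(s,\bm{a}) = \sum_z f^a_z(s)$ with $\phi(s,\bm{a})$ the vector of these masses. Rewards $\mathcal{R}_z$ depend only on the global state, the local state and these masses (not on agent identities) and are non-increasing continuous in the masses; the transition $\mathcal{T}(s'\mid s,\bm{a})$ of global states depends only on the masses of agents selecting actions. With discount $\gamma$, the value of agent $j$ in local state $z$ is $$v_{jz}(s,\pi_{jz},\bm{\pi}_{-j}) = \mathcal{R}_z\big(s,\phi^{\pi_{jz}(s)}(s,\bm{a})\big) + \gamma\int_{s'}\mathcal{T}(s'\mid s,\bm{a})\,v_{jz'}(s',\pi_{jz'},\bm{\pi}_{-j})\,ds'.$$ A joint policy $\bm{\pi}$ is a Nash equilibrium if $v_{iz}(s,\pi_{iz},\bm{\pi}_{-i}) \ge v_{iz}(s,\pi'_{iz},\bm{\pi}_{-i})$ for all $s\in\mathcal{S}$, $z\in\mathcal{Z}$, $i\in\mathcal{N}^s_z$ and all $\pi'_{iz}\in\Pi_z$. *)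

From HB Require Import structures.
From mathcomp Require Import all_boot all_order all_algebra.
From mathcomp Require Import all_classical all_reals all_analysis.
Set Implicit Arguments. Unset Strict Implicit. Unset Printing Implicit Defensive.
Import Order.TTheory GRing.Theory Num.Theory.
Import numFieldNormedType.Exports.
Local Open Scope classical_set_scope.
Local Open Scope ring_scope.

(* Stochastic Non-atomic Congestion Games (SNCG).
   - agents: a measurable space N with a probability measure m;
   - local states: a finite type Z; actions: a finite type Act, with the
     action set of local state z being Az z : {set Act};
   - global states: a measurable space S; loc s k is the local state of
     agent k in global state s, so N^s_z = [set k | loc s k = z];
   - a (local) policy of an agent gives, for every local state z and global
     state s, a distribution over Az z;  a joint policy gives one per agent. *)

Section SNCG.
Context {R : realType} {dN dS : measure_display}
  {N : measurableType dN} {S : measurableType dS} {Z Act : finType}.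

Definition is_dist (A : {set Act}) (p : Act -> R) : Prop :=
  [/\ (forall a, 0 <= p a), \sum_(a : Act) p a = 1 & (forall a, a \notin A -> p a = 0)].

Definition policy := Z -> S -> Act -> R.

Definition valid_policy (Az : Z -> {set Act}) (rho : policy) : Prop :=
  forall z s, is_dist (Az z) (rho z s).

Definition joint_policy := N -> policy.

Definition valid_joint (Az : Z -> {set Act}) (pi : joint_policy) : Prop :=
  (forall k, valid_policy Az (pi k)) /\
  (forall z s a, measurable_fun setT (fun k => pi k z s a)).

Definition Nset (loc : S -> N -> Z) (s : S) (z : Z) : set N := [set k | loc s k = z].

Definition fmass (m : {measure set N -> \bar R}) (loc : S -> N -> Z)
  (pi : joint_policy) (s : S) (z : Z) (a : Act) : R :=
  Rintegral m (Nset loc s z) (fun k => pi k z s a).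

Definition phi (m : {measure set N -> \bar R}) (loc : S -> N -> Z)
  (pi : joint_policy) (s : S) (a : Act) : R :=
  \sum_(z : Z) fmass m loc pi s z a.

Definition upd (pi : joint_policy) (i : N) (rho : policy) : joint_policy :=
  fun k => if k == i then rho else pi k.

(* V is the value function (V z s = v_{jz}(s, rho, pi_{-j})) of an agent using
   policy rho while the joint policy (including that agent) is pi: the bounded,
   measurable solution of the Bellman equation.
   Rw z s a x : reward in local state z, global state s, for choosing action a
     when the mass of agents choosing a is x;
   T s phi : distribution of the next global state given the masses phi;
   P z s a phi s' z' : probability that the agent (in z, choosing a) is in
     local state z' at the next global state s'. *)
Definition is_value (m : {measure set N -> \bar R}) (loc : S -> N -> Z)
  (Rw : Z -> S -> Act -> R -> R) (T : S -> (Act -> R) -> probability S R)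
  (P : Z -> S -> Act -> (Act -> R) -> S -> Z -> R) (gamma : R)
  (rho : policy) (pi : joint_policy) (V : Z -> S -> R) : Prop :=
  [/\ (forall z, measurable_fun setT (V z)),
      (exists B : R, forall z s, `|V z s| <= B) &
      (forall z s, V z s =
         \sum_(a : Act) rho z s a *
           (Rw z s a (phi m loc pi s a) +
            gamma * Rintegral (T s (phi m loc pi s)) setT
              (fun s' => \sum_(z' : Z) P z s a (phi m loc pi s) s' z' * V z' s')))].

Definition nash (m : {measure set N -> \bar R}) (loc : S -> N -> Z)
  (Az : Z -> {set Act})
  (Rw : Z -> S -> Act -> R -> R) (T : S -> (Act -> R) -> probability S R)
  (P : Z -> S -> Act -> (Act -> R) -> S -> Z -> R) (gamma : R)
  (pi : joint_policy) : Prop :=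
  forall (s : S) (z : Z) (i : N), i \in Nset loc s z ->
  forall rho : policy, valid_policy Az rho ->
  forall V V' : Z -> S -> R,
    is_value m loc Rw T P gamma (pi i) pi V ->
    is_value m loc Rw T P gamma rho (upd pi i rho) V' ->
    V' z s <= V z s.

End SNCG.

From HB Require Import structures.
From mathcomp Require Import all_boot all_order all_algebra.
From mathcomp Require Import all_classical all_reals all_analysis.
From mathcomp Require Import measurable_realfun.
Import Order.TTheory GRing.Theory Num.Theory.
Import numFieldNormedType.Exports.
Local Open Scope classical_set_scope.
Local Open Scope ring_scope.

(* Because m is non-atomic, a single agent changing its policy does not change
   the masses phi.  Hence agent i deviating to the policy of agent j faces the
   same Bellman equation as j, so any value function of j is a value function
   of that deviation.  The Nash condition at i then gives V_j <= V_i, and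
   symmetrically V_i <= V_j. *)

Section NullUpdate.
Context {R : realType} {d : measure_display} {T : measurableType d}.
Variable mu : {measure set T -> \bar R}.

Lemma measurable_fun_update (f : T -> R) (i : T) (c : R) :
  measurable [set i] -> measurable_fun setT f ->
  measurable_fun setT (fun k => if k == i then c else f k).
Proof.
move=> mi mf; apply: measurable_fun_ifT => //.
apply: (measurable_fun_bool true).
by rewrite setTI (_ : _ @^-1` _ = [set i]) //; apply/seteqP; split => x /= /eqP.
Qed.

Lemma Rintegral_update_null (D : set T) (f : T -> R) (i : T) (c : R) :
  measurable D -> measurable [set i] -> mu [set i] = 0%E ->
  measurable_fun setT f ->
  Rintegral mu D (fun k => if k == i then c else f k) = Rintegral mu D f.
Proof.
move=> mD mi mu_i0 mf; rewrite /Rintegral; congr fine.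
apply: ae_eq_integral => //.
- by apply/measurable_EFinP/measurable_funTS/measurable_fun_update.
- exact/measurable_EFinP/measurable_funTS.
- exists [set i]; split => // k /= ki; apply/eqP/negPn/negP => k_neq_i.
  by apply: ki => _; rewrite (negbTE k_neq_i).
Qed.

End NullUpdate.

Section SingleDeviation.
Context {R : realType} {dN dS : measure_display}
  {N : measurableType dN} {S : measurableType dS} {Z Act : finType}.
Context {m : {measure set N -> \bar R}} {loc : S -> N -> Z}.
Hypothesis measurable_set1 : forall i : N, measurable [set i].
Hypothesis m_set1 : forall i : N, m [set i] = 0%E.
Hypothesis measurable_Nset : forall s z, measurable (Nset loc s z).

Context {Az : Z -> {set Act}} { pi : @joint_policy R dN dS N S Z Act}.
Hypothesis valid_pi : valid_joint Az pi.

Lemma phi_upd (i : N) (rho : policy) : phi m loc (upd pi i rho) = phi m loc pi.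
Proof.
case: valid_pi => _ mpi; apply/funext => s; apply/funext => a.
apply: eq_bigr => z _; rewrite /fmass.
rewrite (_ : (fun k => _) = fun k => if k == i then rho z s a else pi k z s a).
  exact: Rintegral_update_null.
by apply/funext => k; rewrite /upd; case: (k == i).
Qed.

Lemma is_value_upd Rw T P gamma i rho V :
  is_value m loc Rw T P gamma rho (upd pi i rho) V =
  is_value m loc Rw T P gamma rho pi V.
Proof. by rewrite /is_value phi_upd. Qed.

Context {Rw : Z -> S -> Act -> R -> R} {T : S -> (Act -> R) -> probability S R}
  {P : Z -> S -> Act -> (Act -> R) -> S -> Z -> R} {gamma : R}.
Hypothesis nash_pi : nash m loc Az Rw T P gamma pi.

(* No hypothesis on the local state of j is needed. *)
Lemma nash_value_ge s z i j Vi Vj :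
  i \in Nset loc s z ->
  is_value m loc Rw T P gamma (pi i) pi Vi ->
  is_value m loc Rw T P gamma (pi j) pi Vj ->
  Vj z s <= Vi z s.
Proof.
move=> iz HVi HVj.
apply: (nash_pi s z i iz (pi j)) => //; first by case: valid_pi.
by rewrite is_value_upd.
Qed.

End SingleDeviation.

Theorem proposition2 (R : realType) (dN dS : measure_display)
  (N : measurableType dN) (S : measurableType dS) (Z Act : finType)
  (m : probability N R)
  (Hsing : forall i : N, measurable [set i])
  (Hnonatomic : forall i : N, m [set i] = 0%E)
  (loc : S -> N -> Z)
  (Hloc : forall s z, measurable (Nset loc s z))
  (Az : Z -> {set Act})
  (Rw : Z -> S -> Act -> R -> R)
  (HRdec : forall z s a, {homo Rw z s a : x y /~ x <= y})
  (HRcont : forall z s a, continuous (Rw z s a))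
  (T : S -> (Act -> R) -> probability S R)
  (P : Z -> S -> Act -> (Act -> R) -> S -> Z -> R)
  (HP0 : forall z s a f s' z', 0 <= P z s a f s' z')
  (HP1 : forall z s a f s', \sum_(z' : Z) P z s a f s' z' = 1)
  (gamma : R) (Hgamma : 0 <= gamma < 1)
  (pistar : joint_policy)
  (Hvalid : valid_joint Az pistar)
  (Hnash : nash m loc Az Rw T P gamma pistar) :
  forall (s : S) (z : Z) (i j : N),
    i \in Nset loc s z -> j \in Nset loc s z ->
  forall Vi Vj : Z -> S -> R,
    is_value m loc Rw T P gamma (pistar i) pistar Vi ->
    is_value m loc Rw T P gamma (pistar j) pistar Vj ->
    Vi z s = Vj z s.
Proof.
move=> s z i j iz jz Vi Vj HVi HVj.
have value_ge := nash_value_ge Hsing Hnonatomic Hloc Hvalid Hnash.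
by apply/le_anti/andP; split; [apply: value_ge jz HVj HVi | apply: value_ge iz HVi HVj].
Qed.
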